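(* Let $A,B,C,D,E,F$ be six pairwise distinct points of $\mathbb{R}^3$, no four of which are coplanar, and let $X^*,Y^*\in\mathbb{R}^3\setminus\{A,\dots,F\}$. Consider the system of six equations in unknowns $X,Y\in\mathbb{R}^3$ $$\frac{1}{\|X-T\|^2}+\frac{1}{\|Y-T\|^2}=\frac{1}{\|X^*-T\|^2}+\frac{1}{\|Y^*-T\|^2},\qquad T\in\{A,B,C,D,E,F\}.$$ Then every solution $(X_P,Y_P)$ of this system is uniquely determined by $Y_P$: if $(X_P,Y_P)$ and $(X_Q,Y_P)$ are both solutions, then $X_P=X_Q$.
   Context: $\|\cdot\|$ is the Euclidean norm on $\mathbb{R}^3$. *)

From HB Require Import structures.
From mathcomp Require Import all_boot all_order all_algebra.
From mathcomp Require Import reals.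
Set Implicit Arguments. Unset Strict Implicit. Unset Printing Implicit Defensive.
Import Order.TTheory GRing.Theory Num.Theory.
Local Open Scope ring_scope.

Definition dot3 {R : realType} (u v : 'rV[R]_3) : R := \sum_(i < 3) u 0 i * v 0 i.

Definition sqnorm3 {R : realType} (u : 'rV[R]_3) : R := dot3 u u.

Definition coplanar4 {R : realType} (a b c d : 'rV[R]_3) : Prop :=
  exists (n : 'rV[R]_3) (c0 : R), n != 0 /\
    dot3 n a = c0 /\ dot3 n b = c0 /\ dot3 n c = c0 /\ dot3 n d = c0.

(* (X, Y) solves the system  1/||X-T||^2 + 1/||Y-T||^2 = 1/||X*-T||^2 + 1/||Y*-T||^2
   for every T among the six points P 0, ..., P 5; the equations are only
   meaningful when X and Y avoid the six points, which is required. *)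
Definition is_solution {R : realType} (P : 'I_6 -> 'rV[R]_3)
    (Xs Ys X Y : 'rV[R]_3) : Prop :=
  (forall t, X != P t) /\ (forall t, Y != P t) /\
  forall t : 'I_6,
    (sqnorm3 (X - P t))^-1 + (sqnorm3 (Y - P t))^-1 =
    (sqnorm3 (Xs - P t))^-1 + (sqnorm3 (Ys - P t))^-1.

(* Subtracting the equations satisfied by two solutions (X_P, Y_P) and (X_Q, Y_P)
   gives ||X_P - T|| = ||X_Q - T|| for each of the six points T.  If X_P <> X_Q,
   every such T then lies on the perpendicular bisector plane of X_P and X_Q;
   already four points on that plane contradict the non-coplanarity hypothesis. *)
From HB Require Import structures.
From mathcomp Require Import all_boot all_order all_algebra.
From mathcomp Require Import reals.
From mathcomp Require Import ring lra.
Set Implicit Arguments. Unset Strict Implicit. Unset Printing Implicit Defensive.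
Import Order.TTheory GRing.Theory Num.Theory.
Local Open Scope ring_scope.

Section Bisector.

Variable R : realType.
Implicit Types x y t : 'rV[R]_3.

Lemma dot3Bl x y t : dot3 (y - x) t = dot3 y t - dot3 x t.
Proof. by rewrite /dot3 -sumrB; apply: eq_bigr => i _; rewrite !mxE; ring. Qed.

Lemma sqnorm3B x t : sqnorm3 (x - t) = sqnorm3 x - 2 * dot3 x t + sqnorm3 t.
Proof.
rewrite /sqnorm3 /dot3 mulr_sumr -sumrB -big_split /=.
by apply: eq_bigr => i _; rewrite !mxE; ring.
Qed.

Lemma equidistant_bisector x y t :
  sqnorm3 (x - t) = sqnorm3 (y - t) ->
  dot3 (y - x) t = (sqnorm3 y - sqnorm3 x) / 2.
Proof. by rewrite !sqnorm3B dot3Bl => ?; lra. Qed.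

Lemma equidistant_coplanar4 x y a b c d :
  x != y -> (forall t, t \in [:: a; b; c; d] -> sqnorm3 (x - t) = sqnorm3 (y - t)) ->
  coplanar4 a b c d.
Proof.
move=> neq_xy eqd; exists (y - x), ((sqnorm3 y - sqnorm3 x) / 2).
rewrite subr_eq0 eq_sym neq_xy.
by do !split; apply/equidistant_bisector/eqd; rewrite !inE eqxx ?orbT.
Qed.

End Bisector.

Lemma solutions_equidistant (R : realType) (P : 'I_6 -> 'rV[R]_3)
    (Xs Ys X X' Y : 'rV[R]_3) (t : 'I_6) :
  is_solution P Xs Ys X Y -> is_solution P Xs Ys X' Y ->
  sqnorm3 (X - P t) = sqnorm3 (X' - P t).
Proof.
move=> [_ [_ solX]] [_ [_ solX']]; apply: invr_inj.
by apply: (addIr (sqnorm3 (Y - P t))^-1); rewrite solX solX'.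
Qed.

Theorem lemma1 (R : realType) (P : 'I_6 -> 'rV[R]_3)
  (Pinj : injective P)
  (Pnocop : forall i j k l : 'I_6,
     uniq [:: i; j; k; l] -> ~ coplanar4 (P i) (P j) (P k) (P l))
  (Xs Ys : 'rV[R]_3)
  (hXs : forall t, Xs != P t) (hYs : forall t, Ys != P t)
  (XP XQ YP : 'rV[R]_3) :
  is_solution P Xs Ys XP YP -> is_solution P Xs Ys XQ YP -> XP = XQ.
Proof.
move=> solP solQ; apply/eqP/negPn/negP => neq_PQ.
apply: (Pnocop 0 1 2 3 isT); apply: (equidistant_coplanar4 neq_PQ) => t.
by rewrite !inE => /or4P[] /eqP->; apply: solutions_equidistant solP solQ.
Qed.
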